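(* Let $T\in\mathcal{L}(\mathcal{H})$ have closed range and let $n\ge1$ be such that $T^n$ has closed range. (1) If $T^n$ is EP, then $T$ is $n$-EP. (2) If $T$ is SD, then $T$ is $n$-EP if and only if $T^n$ is EP.
   Context: $\mathcal{H}$ is a Hilbert space, $\mathcal{L}(\mathcal{H})$ the bounded operators on it. For $A$ with closed range, $A^\dagger$ is its Moore–Penrose inverse (unique solution of $AA^\dagger A=A$, $A^\dagger AA^\dagger=A^\dagger$, $(A^\dagger A)^*=A^\dagger A$, $(AA^\dagger)^*=AA^\dagger$). $A$ is EP if it has closed range and $R(A)=R(A^* )$ (equivalently $AA^\dagger=A^\dagger A$). $T$ is SD if it has closed range and $T^*T^\dagger=T^\dagger T^*$. For $n\ge1$, $T$ is $n$-EP if $T$ has closed range and $T^nT^\dagger=T^\dagger T^n$. *)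

From HB Require Import structures.
From mathcomp Require Import all_boot all_order all_algebra.
From mathcomp Require Import all_classical all_reals all_analysis.
From mathcomp Require Import complex.
Set Implicit Arguments. Unset Strict Implicit. Unset Printing Implicit Defensive.
Import Order.TTheory GRing.Theory Num.Theory.
Import numFieldNormedType.Exports.
Local Open Scope classical_set_scope.
Local Open Scope ring_scope.
Local Open Scope complex_scope.

Section Hilbert.
Variable R : realType.
Notation C := R[i].

(* [ip] is an inner product on the complex normed space H inducing its norm:
   linear in the first argument, conjugate symmetric, and <x,x> = |x|^2.
   Together with completeness of H this makes H a complex Hilbert space. *)
Definition is_inner_product (H : normedModType C) (ip : H -> H -> C) : Prop :=
  [/\ forall (a : C) (x y z : H), ip (a *: x + y) z = a * ip x z + ip y z,
      forall x y : H, ip y x = Num.conj (ip x y)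
    & forall x : H, ip x x = `|x| ^+ 2].

Definition bounded_op (H : normedModType C) (A : H -> H) : Prop :=
  [/\ forall x y : H, A (x + y) = A x + A y,
      forall (a : C) (x : H), A (a *: x) = a *: A x
    & continuous A].

Definition closed_range (H : normedModType C) (A : H -> H) : Prop :=
  closed (range A).

Definition is_adjoint (H : normedModType C) (ip : H -> H -> C) (A B : H -> H) : Prop :=
  bounded_op B /\ forall x y : H, ip (A x) y = ip x (B y).

Definition self_adjoint (H : normedModType C) (ip : H -> H -> C) (S : H -> H) : Prop :=
  forall x y : H, ip (S x) y = ip x (S y).

Definition is_MP_inverse (H : normedModType C) (ip : H -> H -> C) (A X : H -> H) : Prop :=
  [/\ bounded_op X,
      A \o X \o A = A,
      X \o A \o X = X,
      self_adjoint ip (X \o A)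
    & self_adjoint ip (A \o X)].

Definition EP (H : normedModType C) (ip : H -> H -> C) (A : H -> H) : Prop :=
  closed_range A /\ forall B, is_adjoint ip A B -> range A = range B.

Definition SD (H : normedModType C) (ip : H -> H -> C) (T : H -> H) : Prop :=
  closed_range T /\ forall Ts Td, is_adjoint ip T Ts -> is_MP_inverse ip T Td ->
    Ts \o Td = Td \o Ts.

Definition nEP (H : normedModType C) (ip : H -> H -> C) (n : nat) (T : H -> H) : Prop :=
  closed_range T /\ forall Td, is_MP_inverse ip T Td ->
    iter n T \o Td = Td \o iter n T.

End Hilbert.

From HB Require Import structures.
From mathcomp Require Import all_boot all_order all_algebra.
From mathcomp Require Import all_classical all_reals all_analysis.
From mathcomp Require Import complex.
From mathcomp Require Import ring lra.
Import Order.TTheory GRing.Theory Num.Theory.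
Import numFieldNormedType.Exports.
Local Open Scope classical_set_scope.
Local Open Scope ring_scope.
Local Open Scope complex_scope.
Set Implicit Arguments. Unset Strict Implicit. Unset Printing Implicit Defensive.

(* (1) Let B = (T^n)*.  Taking adjoints in T^n T^+ T = T^n shows that the
   projection T^+ T fixes R(B) = R(T^n), i.e. T^+ T^(n+1) = T^n; and since
   R(B) = R(T^n) is contained in R(T), which is orthogonal to R(1 - T T^+), also
   T^n T T^+ = T^n.  Hence T^n T^+ = T^+ T^(n+1) T^+ = T^+ T^n.
   (2) Writing T^+ = T^+ T T^+ = T* (T^+)* T^+ and moving T* past T^+ (this is
   where SD is used) gives R((T^+)^k) <= R((T* )^k) for every k, while n-EP
   gives T^n = (T^+)^n T^(2n); hence R(T^n) <= R((T* )^n).  The same argument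
   for T*, whose Moore-Penrose inverse is (T^+)*, gives the reverse inclusion.
   Adjoints exist by the Riesz representation theorem.  T^+ y is the vector
   orthogonal to ker T that T maps to the projection P y of y onto the closed
   range R(T); it is bounded by a Baire category argument applied to the closed
   sets {y | |<y, P w>| <= k |T* w| for all w}, which cover H because P y = T x
   gives <y, P w> = <x, T* w>. *)

Lemma iter_comm_fun (T : Type) (f g : T -> T) n :
  f \o g = g \o f -> forall x, iter n f (g x) = g (iter n f x).
Proof.
by move=> fg; elim: n => [|n IH] x //=; rewrite IH; exact: (congr1 (fun h => h _) fg).
Qed.

Section AdditiveMaps.
Variables (U V : zmodType) (f : U -> V).
Hypothesis fD : {morph f : x y / x + y}.

Lemma morphD0 : f 0 = 0.
Proof. by apply: (addrI (f 0)); rewrite -fD !addr0. Qed.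

Lemma morphDB x y : f (x - y) = f x - f y.
Proof. by apply/eqP; rewrite eq_sym subr_eq -fD subrK. Qed.

End AdditiveMaps.

Section NormedModule.
Variables (K : numFieldType) (V : normedModType K).

Lemma closure_normP (S : set V) v :
  closure S v <-> forall e : K, 0 < e -> exists2 s, S s & `|v - s| < e.
Proof.
split=> [cl e e0 | h B /nbhs_normP [e /= e0 hB]].
  have : nbhs v (ball_ Num.Def.normr v e) by apply/nbhs_normP; exists e.
  by move/cl => [s [Ss bs]]; exists s.
by have [s Ss hs] := h e e0; exists s; split => //; apply: hB.
Qed.

Lemma closed_kernel_normle (W : normedZmodType K) (f : V -> W) (M : K) : 0 < M ->
  {morph f : x y / x + y} -> (forall x, `|f x| <= M * `|x|) ->
  closed [set x | f x = 0].
Proof.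
move=> M0 fD fM l /closure_normP hl; have [//|fl] := eqVneq (f l) 0.
have e0 : 0 < `|f l| / M by rewrite divr_gt0 // normr_gt0.
have [s /= fs ls] := hl _ e0.
have : `|f l| < `|f l|.
  rewrite -{1}[f l]subr0 -fs -morphDB //; apply: le_lt_trans (fM _) _.
  by rewrite -ltr_pdivlMl // mulrC.
by rewrite ltxx.
Qed.

Lemma linear_normle_continuous (W : pseudoMetricNormedZmodType K) (f : V -> W)
    (M : K) : 0 < M -> {morph f : x y / x + y} ->
  (forall x, `|f x| <= M * `|x|) -> continuous f.
Proof.
move=> M0 fD fM x; apply/cvgrPdist_lt => e e0; apply/nbhs_normP.
exists (e / M); first exact: divr_gt0.
move=> y /= hy; rewrite -morphDB //; apply: le_lt_trans (fM _) _.
by rewrite -ltr_pdivlMl // mulrC.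
Qed.

Lemma continuous_linear_normle (W : normedModType K) (f : V -> W) :
  {morph f : x y / x + y} -> (forall (a : K) x, f (a *: x) = a *: f x) ->
  continuous f -> exists2 M : K, 0 < M & forall x, `|f x| <= M * `|x|.
Proof.
move=> fD fZ fc.
have fL : linear f by move=> a x y; rewrite fD fZ.
pose F : {linear V -> W} := HB.pack f (GRing.isLinear.Build _ _ _ _ f fL).
have /linear_boundedP := @continuous_linear_bounded _ _ _ 0 F (fc 0).
by move=> /pinfty_ex_gt0 [M M0 hM]; exists M.
Qed.

End NormedModule.

Section RealNorm.
Variable R : realType.
Local Notation C := R[i].

(* Norms of complex normed spaces read as reals, so that lra and nra apply. *)
Definition rnorm (V : normedZmodType C) (v : V) : R := complex.Re `|v|.

Lemma normE (V : normedZmodType C) (v : V) : `|v| = (rnorm v)%:C.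
Proof. by rewrite RRe_real // normr_real. Qed.

Lemma realC_gt0 (t : R) : (0 < t%:C) = (0 < t).
Proof. by rewrite -(rmorph0 (real_complex R)) ltcR. Qed.

Lemma complex_gt0P (e : C) : 0 < e -> exists2 r : R, 0 < r & e = r%:C.
Proof.
move=> e0; exists (complex.Re e); last by rewrite RRe_real ?gtr0_real.
by rewrite -realC_gt0 RRe_real ?gtr0_real.
Qed.

Section NormedZmodule.
Variable V : normedZmodType C.
Implicit Types u v : V.

Lemma rnorm_ge0 v : 0 <= rnorm v.
Proof. by rewrite -lecR -normE; exact: normr_ge0. Qed.

Lemma rnormD u v : rnorm (u + v) <= rnorm u + rnorm v.
Proof. by rewrite -lecR rmorphD /= -!normE ler_normD. Qed.

Lemma rnormN v : rnorm (- v) = rnorm v.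
Proof. by rewrite /rnorm normrN. Qed.

Lemma rnorm_distC u v : rnorm (u - v) = rnorm (v - u).
Proof. by rewrite /rnorm distrC. Qed.

Lemma rnorm0 : rnorm (0 : V) = 0.
Proof. by rewrite /rnorm normr0. Qed.

Lemma rnorm_eq0 v : (rnorm v == 0) = (v == 0).
Proof. by rewrite -[v == 0]normr_eq0 normE fmorph_eq0. Qed.

Lemma rnorm_lt v (e : R) : (`|v| < e%:C) = (rnorm v < e).
Proof. by rewrite normE ltcR. Qed.

End NormedZmodule.

Lemma rnormM (a b : C) : rnorm (a * b) = rnorm a * rnorm b.
Proof. by apply: complexI; rewrite rmorphM /= -!normE normrM. Qed.

Lemma rnorm_real (t : R) : 0 <= t -> rnorm t%:C = t.
Proof. by move=> t0; apply: complexI; rewrite -normE ger0_norm ?lecR. Qed.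

Lemma rnormZ (V : normedModType C) (c : C) (v : V) :
  rnorm (c *: v) = rnorm c * rnorm v.
Proof. by apply: complexI; rewrite rmorphM /= -!normE normrZ. Qed.

Lemma closure_rnormP (V : normedModType C) (S : set V) v :
  closure S v <-> forall e : R, 0 < e -> exists2 s, S s & rnorm (v - s) < e.
Proof.
rewrite closure_normP; split=> [h e e0 | h _ /complex_gt0P [e e0 ->]].
  have e0' : 0 < e%:C by rewrite realC_gt0.
  by have [s Ss hs] := h _ e0'; exists s; rewrite // -rnorm_lt.
by have [s Ss hs] := h e e0; exists s; rewrite // rnorm_lt.
Qed.

Lemma closedN_ball (V : normedModType C) (S : set V) y : closed S -> ~ S y ->
  exists2 s : R, 0 < s & forall z, rnorm (y - z) < s -> ~ S z.
Proof.
move=> cS Sy; apply: contrapT => h; apply/Sy/cS/closure_rnormP => e e0.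
apply: contrapT => h'; apply: h; exists e => // z yz Sz; apply: h'; by exists z.
Qed.

Lemma rnorm_limit_le (V : pseudoMetricNormedZmodType C) (x l : V) (u : nat -> V)
    (d : R) :
  (forall k, rnorm (x - u k) < d + k.+1%:R^-1) -> u @ \oo --> l ->
  rnorm (x - l) <= d.
Proof.
move=> hu /cvgrPdist_lt ul; apply/ler_addgt0Pr => e e0.
have e2 : 0 < (e / 2)%:C by rewrite realC_gt0 divr_gt0.
have [N _ hN] := ul _ e2.
have e2_ge0 : 0 <= 2 / e by rewrite divr_ge0 // ltW.
set k := (N + Num.Def.archi_bound (2 / e))%N.
have ulk : rnorm (l - u k) < e / 2.
  by rewrite -rnorm_lt; apply: hN; rewrite /= /k leq_addr.
have k_gt : k.+1%:R^-1 < e / 2.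
  rewrite -(invf_div 2 e) ltf_pV2 ?posrE ?ltr0Sn ?divr_gt0 //.
  apply: lt_le_trans (archi_boundP e2_ge0) _.
  by rewrite ler_nat /k; apply: leqW; exact: leq_addl.
have := rnormD (x - u k) (u k - l); rewrite addrA subrK (rnorm_distC (u k)).
by move: (hu k) k_gt ulk; set t := k.+1%:R^-1; lra.
Qed.

End RealNorm.

Section BoundedOperator.
Variables (R : realType) (H : normedModType R[i]).
Local Notation C := R[i].
Implicit Types (A : H -> H) (S : set H).

Definition subspace S :=
  [/\ S 0, forall u v, S u -> S v -> S (u + v) & forall (a : C) u, S u -> S (a *: u)].

Lemma subspaceB S u v : subspace S -> S u -> S v -> S (u - v).
Proof. by case=> _ SD SZ Su Sv; apply: SD => //; rewrite -scaleN1r; apply: SZ. Qed.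

Lemma closure_subspace S : subspace S -> subspace (closure S).
Proof.
case=> S0 SD SZ; split; first exact: subset_closure.
- move=> u v /closure_rnormP cu /closure_rnormP cv; apply/closure_rnormP => e e0.
  have e2 : 0 < e / 2 by rewrite divr_gt0.
  have [s Ss us] := cu _ e2; have [t St vt] := cv _ e2.
  exists (s + t); first exact: SD.
  by have := rnormD (u - s) (v - t); rewrite addrACA -opprD; lra.
- move=> a u /closure_rnormP cu; apply/closure_rnormP => e e0.
  have q0 : 0 < rnorm a + 1 by have := rnorm_ge0 a; lra.
  have [s Ss us] := cu _ (divr_gt0 e0 q0).
  exists (a *: s); first exact: SZ.
  have : e / (rnorm a + 1) * (rnorm a + 1) = e by rewrite divfK // gt_eqF.
  have := rnorm_ge0 a; have := rnorm_ge0 (u - s).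
  rewrite -scalerBr rnormZ; move: us; set t := e / _; nra.
Qed.

Lemma subspace_kernel A : bounded_op A -> subspace [set x | A x = 0].
Proof.
case=> AD AZ _; split => /= [|u v Au Av|a u Au]; first exact: morphD0.
  by rewrite AD Au Av addr0.
by rewrite AZ Au scaler0.
Qed.

Lemma closed_kernel_bounded A : bounded_op A -> closed [set x | A x = 0].
Proof.
case=> AD AZ Ac; have [M M0 AM] := continuous_linear_normle AD AZ Ac.
exact: closed_kernel_normle M0 AD AM.
Qed.

Lemma subspace_range A : bounded_op A -> subspace (range A).
Proof.
case=> AD AZ _; split.
- by exists 0 => //; exact: morphD0.
- by move=> _ _ [u _ <-] [v _ <-]; exists (u + v) => //; rewrite AD.
- by move=> a _ [u _ <-]; exists (a *: u) => //; rewrite AZ.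
Qed.

Lemma bounded_iter A n : bounded_op A -> bounded_op (iter n A).
Proof.
case=> AD AZ Ac; elim: n => [|n [ID IZ Ic]]; first by split => // x; exact: cvg_id.
split => /= [x y|a x|x]; first by rewrite ID AD.
  by rewrite IZ AZ.
by apply: continuous_comp; [exact: Ic | exact: Ac].
Qed.

End BoundedOperator.

Section InnerProductSpace.
Variables (R : realType) (H : normedModType R[i]) (ip : H -> H -> R[i]).
Hypothesis hip : is_inner_product ip.
Local Notation C := R[i].
Implicit Types (x y z u v : H) (a c : C).

Lemma ipDZl a x y z : ip (a *: x + y) z = a * ip x z + ip y z.
Proof. by case: hip. Qed.

Lemma ip_conj x y : ip y x = Num.conj (ip x y).
Proof. by case: hip. Qed.

Lemma ip_self x : ip x x = `|x| ^+ 2.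
Proof. by case: hip. Qed.

Lemma ip0l z : ip 0 z = 0.
Proof.
have := ipDZl 1 0 0 z; rewrite scaler0 addr0 mul1r -{1}[ip 0 z]addr0.
by move/addrI.
Qed.

Lemma ipDl x y z : ip (x + y) z = ip x z + ip y z.
Proof. by rewrite -[x in LHS]scale1r ipDZl mul1r. Qed.

Lemma ipZl a x z : ip (a *: x) z = a * ip x z.
Proof. by rewrite -[a *: x]addr0 ipDZl ip0l addr0. Qed.

Lemma ipNl x z : ip (- x) z = - ip x z.
Proof. by rewrite -scaleN1r ipZl mulN1r. Qed.

Lemma ipBl x y z : ip (x - y) z = ip x z - ip y z.
Proof. by rewrite ipDl ipNl. Qed.

Lemma ip0r z : ip z 0 = 0.
Proof. by rewrite ip_conj ip0l conjC0. Qed.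

Lemma ipDr x y z : ip z (x + y) = ip z x + ip z y.
Proof. by rewrite [ip z x]ip_conj [ip z y]ip_conj [LHS]ip_conj ipDl rmorphD. Qed.

Lemma ipZr a x z : ip z (a *: x) = Num.conj a * ip z x.
Proof. by rewrite [ip z x]ip_conj [LHS]ip_conj ipZl rmorphM. Qed.

Lemma ipNr x z : ip z (- x) = - ip z x.
Proof. by rewrite [ip z x]ip_conj [LHS]ip_conj ipNl rmorphN. Qed.

Lemma ipBr x y z : ip z (x - y) = ip z x - ip z y.
Proof. by rewrite ipDr ipNr. Qed.

Lemma ip_self_ge0 x : 0 <= ip x x.
Proof. by rewrite ip_self exprn_ge0. Qed.

Lemma ip_self_eq0 x : ip x x = 0 -> x = 0.
Proof. by rewrite ip_self => /eqP; rewrite expf_eq0 /= normr_eq0 => /eqP. Qed.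

Lemma ip_injr u v : (forall x, ip x u = ip x v) -> u = v.
Proof.
by move=> h; apply/eqP; rewrite -subr_eq0; apply/eqP/ip_self_eq0; rewrite ipBr h subrr.
Qed.

Lemma ip_injl u v : (forall x, ip u x = ip v x) -> u = v.
Proof. by move=> h; apply: ip_injr => x; rewrite ip_conj h -ip_conj. Qed.

Lemma ip_self_sub_proj_line x y : y != 0 ->
  ip (x - (ip x y / `|y| ^+ 2) *: y) (x - (ip x y / `|y| ^+ 2) *: y) =
  `|x| ^+ 2 - `|ip x y| ^+ 2 / `|y| ^+ 2.
Proof.
move=> y0; set n := `|y| ^+ 2; set a := ip x y.
have n0 : n != 0 by rewrite expf_eq0 /= normr_eq0.
have conj_c : Num.conj (a / n) = Num.conj a / n.
  by rewrite fmorph_div /= (geC0_conj (exprn_ge0 _ (normr_ge0 y))).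
rewrite ipBl !ipBr !ipZl !ipZr conj_c [ip y x]ip_conj !ip_self -/n -/a normCK.
by field.
Qed.

Lemma normr_ip_le x y : `|ip x y| <= `|x| * `|y|.
Proof.
have [->|y0] := eqVneq y 0; first by rewrite ip0r !normr0 mulr0.
have n0 : 0 < `|y| ^+ 2 by rewrite exprn_gt0 // normr_gt0.
have := ip_self_ge0 (x - (ip x y / `|y| ^+ 2) *: y).
rewrite ip_self_sub_proj_line // subr_ge0 ler_pdivrMr // -exprMn.
by rewrite ler_pXn2r // ?nnegrE // mulr_ge0.
Qed.

Lemma rnorm_ip_le x y : rnorm (ip x y) <= rnorm x * rnorm y.
Proof. by rewrite -lecR rmorphM /= -!normE normr_ip_le. Qed.

Lemma rnorm_ip_self x : rnorm (ip x x) = rnorm x ^+ 2.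
Proof. by apply: complexI; rewrite rmorphXn /= -!normE ip_self normrX normr_id. Qed.

Lemma rnorm_parallelogram x y :
  rnorm (x + y) ^+ 2 + rnorm (x - y) ^+ 2 = 2 * rnorm x ^+ 2 + 2 * rnorm y ^+ 2.
Proof.
apply: complexI; rewrite !rmorphD !rmorphXn !rmorphM rmorph_nat /= -!normE.
by rewrite -!expr2 -!ip_self !ipDl !ipDr !ipNl !ipNr; ring.
Qed.

Definition orth_proj (S : set H) (P : H -> H) :=
  forall x, S (P x) /\ forall s, S s -> ip (x - P x) s = 0.

Section OrthogonalProjection.
Variables (S : set H) (P : H -> H).
Hypotheses (S_subspace : subspace S) (SP : orth_proj S P).

Lemma orth_proj_uniq x q : S q -> (forall s, S s -> ip (x - q) s = 0) -> q = P x.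
Proof.
move=> Sq hq; have [SPx hPx] := SP x.
have Sd : S (P x - q) by apply: subspaceB.
have e : P x - q = (x - q) - (x - P x) by rewrite opprB [RHS]addrC addrA subrK.
apply/eqP; rewrite eq_sym -subr_eq0; apply/eqP/ip_self_eq0.
by rewrite {1}e ipBl hq // hPx // subrr.
Qed.

Lemma orth_proj_id x : S x -> P x = x.
Proof. by move=> Sx; symmetry; apply: orth_proj_uniq => // s _; rewrite subrr ip0l. Qed.

Lemma orth_proj_self_adjoint : self_adjoint ip P.
Proof.
move=> x y; have [SPx hPx] := SP x; have [SPy hPy] := SP y.
have -> : ip (P x) y = ip (P x) (P y) + ip (P x) (y - P y).
  by rewrite ipBr addrC subrK.
have -> : ip x (P y) = ip (P x) (P y) + ip (x - P x) (P y).
  by rewrite ipBl addrC subrK.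
by rewrite hPx // [ip (P x) (y - _)]ip_conj hPy // conjC0.
Qed.

Lemma orth_projD x y : P (x + y) = P x + P y.
Proof.
have [SPx hPx] := SP x; have [SPy hPy] := SP y; have [_ SD _] := S_subspace.
symmetry; apply: orth_proj_uniq; first exact: SD.
by move=> s Ss; rewrite opprD addrACA ipDl hPx // hPy // addr0.
Qed.

Lemma orth_projZ a x : P (a *: x) = a *: P x.
Proof.
have [SPx hPx] := SP x; have [_ _ SZ] := S_subspace.
symmetry; apply: orth_proj_uniq; first exact: SZ.
by move=> s Ss; rewrite -scalerBr ipZl hPx // mulr0.
Qed.

End OrthogonalProjection.

Lemma nearest_point_orth S x p : subspace S -> S p ->
  (forall s, S s -> rnorm (x - p) <= rnorm (x - s)) ->
  forall s, S s -> ip (x - p) s = 0.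
Proof.
move=> [_ SD SZ] Sp p_min s Ss; have [->|s0] := eqVneq s 0; first exact: ip0r.
set w := x - p; set c := ip w s / `|s| ^+ 2.
have := p_min (p + c *: s) (SD _ _ Sp (SZ _ _ Ss)).
rewrite opprD addrA -/w => near_p.
have : `|w| ^+ 2 <= `|w - c *: s| ^+ 2.
  by rewrite ler_pXn2r ?nnegrE ?normr_ge0 // !normE lecR.
rewrite -(ip_self (w - _)) ip_self_sub_proj_line // => h.
have le0 : `|ip w s| ^+ 2 / `|s| ^+ 2 <= 0.
  by move: h; rewrite -subr_ge0 addrAC subrr add0r oppr_ge0.
have ge0 : 0 <= `|ip w s| ^+ 2 / `|s| ^+ 2 by rewrite divr_ge0 // exprn_ge0.
have /eqP : `|ip w s| ^+ 2 / `|s| ^+ 2 = 0 by apply/le_anti; rewrite le0 ge0.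
by rewrite mulf_eq0 invr_eq0 !expf_eq0 /= !normr_eq0 (negbTE s0) orbF => /eqP.
Qed.

Lemma parallelogram_dist_le S x (d : R) s s' : subspace S -> 0 <= d ->
  (forall t, S t -> d <= rnorm (x - t)) -> S s -> S s' ->
  rnorm (s - s') ^+ 2 <=
    2 * rnorm (x - s) ^+ 2 + 2 * rnorm (x - s') ^+ 2 - 4 * d ^+ 2.
Proof.
move=> [_ SD SZ] d0 d_le Ss Ss'.
have rnorm2 : rnorm (2 : C) = 2 by apply: complexI; rewrite -normE normr_nat rmorph_nat.
have mid : 2 * d <= rnorm ((x - s) + (x - s')).
  have -> : (x - s) + (x - s') = 2 *: (x - 2^-1 *: (s + s')).
    rewrite scalerBr scalerA mulfV ?pnatr_eq0 // scale1r scaler_nat mulr2n.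
    by rewrite opprD addrACA.
  by rewrite rnormZ rnorm2 ler_pM2l ?ltr0Sn //; apply/d_le/SZ/SD.
have := rnorm_parallelogram (x - s) (x - s').
have -> : (x - s) - (x - s') = s' - s by rewrite opprB addrC addrA subrK.
rewrite (rnorm_distC s') => par.
have : (2 * d) ^+ 2 <= rnorm (x - s + (x - s')) ^+ 2.
  by rewrite ler_pXn2r // ?nnegrE ?mulr_ge0 ?rnorm_ge0.
by rewrite exprMn; lra.
Qed.

Lemma minimizing_seq_cauchy S x (d : R) (u : nat -> H) : subspace S -> 0 <= d ->
  (forall t, S t -> d <= rnorm (x - t)) -> (forall k, S (u k)) ->
  (forall k, rnorm (x - u k) < d + k.+1%:R^-1) ->
  forall e : C, 0 < e -> exists N, forall n, (N <= n)%N -> `|u N - u n| < e.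
Proof.
move=> sS d0 d_le Su hu _ /complex_gt0P [r r0 ->].
have K0 : 0 <= 4 * (2 * d + 1) / r ^+ 2.
  by rewrite divr_ge0 ?exprn_ge0 ?ltW //; lra.
pose N := Num.Def.archi_bound (4 * (2 * d + 1) / r ^+ 2).
exists N => n Nn; rewrite rnorm_lt.
set eta : R := N.+1%:R^-1.
have eta0 : 0 < eta by rewrite invr_gt0 ltr0Sn.
have eta1 : eta <= 1 by rewrite invr_le1 ?unitfE ?pnatr_eq0 // ler1n.
have small : 4 * (2 * d + 1) * eta < r ^+ 2.
  rewrite /eta ltr_pdivrMr ?ltr0Sn // -ltr_pdivrMl ?exprn_gt0 //.
  by rewrite mulrC; apply: lt_le_trans (archi_boundP K0) _; rewrite ler_nat.
have huN : rnorm (x - u N) < d + eta := hu N.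
have hun : rnorm (x - u n) < d + eta.
  by apply: lt_le_trans (hu n) _; rewrite lerD2l lef_pV2 ?posrE // ler_nat.
have := parallelogram_dist_le sS d0 d_le (Su N) (Su n).
have := rnorm_ge0 (u N - u n); have := rnorm_ge0 (x - u N).
have := rnorm_ge0 (x - u n); move: huN hun small.
set a := rnorm (x - u N); set b := rnorm (x - u n); set q := rnorm (u N - u n).
move=> *; nra.
Qed.

Lemma closed_ip_le (Q : H -> H) (rho : H -> R) :
  closed [set y | forall w, rnorm (ip y (Q w)) <= rho w].
Proof.
move=> l /closure_rnormP hl w /=; apply/ler_addgt0Pr => e e0.
have q0 : 0 < rnorm (Q w) + 1 by have := rnorm_ge0 (Q w); lra.
have [s /(_ w) sw ls] := hl _ (divr_gt0 e0 q0).
have := rnormD (ip s (Q w)) (ip (l - s) (Q w)); rewrite -ipDl subrKC.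
have := rnorm_ip_le (l - s) (Q w).
have := rnorm_ge0 (l - s); have := rnorm_ge0 (Q w).
have : e / (rnorm (Q w) + 1) * (rnorm (Q w) + 1) = e by rewrite divfK // gt_eqF.
move: ls; set t := e / _; nra.
Qed.

Lemma ip_bound_of_ball y0 (r c : R) v : 0 < r ->
  (forall y, rnorm (y0 - y) < r -> rnorm (ip y v) <= c) ->
  forall z, rnorm (ip z v) <= 4 * c / r * rnorm z.
Proof.
move=> r0 hc z.
have c_y0 : rnorm (ip y0 v) <= c by apply: hc; rewrite subrr rnorm0.
have [->|z0] := eqVneq z 0; first by rewrite ip0l !rnorm0 mulr0.
have z_gt0 : 0 < rnorm z by rewrite lt_def rnorm_eq0 z0 rnorm_ge0.
set t := r / (2 * rnorm z).
have t0 : 0 < t by rewrite divr_gt0 // mulr_gt0.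
have t_ge0 := ltW t0.
have tz : t * rnorm z = r / 2 by rewrite /t; field; rewrite gt_eqF.
have c_tz : rnorm (ip (y0 + t%:C *: z) v) <= c.
  apply: hc; rewrite opprD addrA subrr sub0r rnormN rnormZ rnorm_real //.
  by rewrite tz; lra.
have := rnormD (ip (y0 + t%:C *: z) v) (- ip y0 v).
have -> : ip (y0 + t%:C *: z) v + - ip y0 v = t%:C * ip z v.
  by rewrite ipDl ipZl addrC addKr.
rewrite rnormM rnormN rnorm_real // => tle.
rewrite -(ler_pM2l t0) mulrCA tz.
have -> : 4 * c / r * (r / 2) = 2 * c by field; rewrite gt_eqF.
lra.
Qed.

Lemma rnorm_le_of_ip_le (V : set H) u (c : R) : 0 <= c -> closure V u ->
  (forall v, V v -> rnorm (ip u v) <= c * rnorm v) -> rnorm u <= c.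
Proof.
move=> c0 /closure_rnormP Vu hc.
have sq : rnorm u ^+ 2 <= c * rnorm u.
  apply/ler_addgt0Pr => e e0.
  have q0 : 0 < c + rnorm u + 1 by have := rnorm_ge0 u; lra.
  have [v Vv uv] := Vu _ (divr_gt0 e0 q0).
  have := rnormD (ip u v) (ip u (u - v)).
  rewrite -ipDr subrKC rnorm_ip_self.
  have := hc v Vv; have := rnorm_ip_le u (u - v).
  have := rnormD u (v - u); rewrite subrKC (rnorm_distC v).
  have := rnorm_ge0 (u - v); have := rnorm_ge0 u; have := rnorm_ge0 v.
  have : e / (c + rnorm u + 1) * (c + rnorm u + 1) = e by rewrite divfK // gt_eqF.
  move: uv; set t := e / _; set U := rnorm u; set D := rnorm (u - v).
  set W := rnorm v; set X := rnorm (ip u v); set Y := rnorm (ip u (u - v)).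
  move=> Dt te W0 U0 D0 WUD YUD XcW UXY.
  have s1 : c * W <= c * (U + D) by apply: ler_wpM2l.
  have s2 : D * (c + U) <= t * (c + U) by apply: ler_wpM2r; lra.
  lra.
case: (lerP (rnorm u) c) => // cu.
by have := rnorm_ge0 u; nra.
Qed.

Definition adjoint (A B : H -> H) := forall x y, ip (A x) y = ip x (B y).

Section Adjoint.
Implicit Types A B X : H -> H.

Lemma adjoint_uniq A B B' : adjoint A B -> adjoint A B' -> B = B'.
Proof. by move=> hB hB'; apply: funext => y; apply: ip_injr => x; rewrite -hB hB'. Qed.

Lemma adjoint_sym A B : adjoint A B -> adjoint B A.
Proof. by move=> hB x y; rewrite ip_conj -hB -ip_conj. Qed.

Lemma adjoint_comp A A' B B' :
  adjoint A A' -> adjoint B B' -> adjoint (A \o B) (B' \o A').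
Proof. by move=> hA hB x y /=; rewrite hA hB. Qed.

Lemma adjoint_iter A A' n : adjoint A A' -> adjoint (iter n A) (iter n A').
Proof. by move=> hA; elim: n => [|n IH] x y //=; rewrite hA IH -iterSr. Qed.

Lemma adjoint_eq A A' B B' : adjoint A A' -> adjoint B B' -> A = B -> A' = B'.
Proof. by move=> hA hB AB; apply: adjoint_uniq hB; rewrite -AB. Qed.

Lemma adjoint_comm A A' B B' : adjoint A A' -> adjoint B B' ->
  A \o B = B \o A -> A' \o B' = B' \o A'.
Proof.
by move=> hA hB AB; apply: adjoint_eq (adjoint_comp hB hA) (adjoint_comp hA hB) _.
Qed.

Definition penrose A X := [/\ A \o X \o A = A, X \o A \o X = X,
  self_adjoint ip (X \o A) & self_adjoint ip (A \o X)].

Lemma MP_inverse_penrose A X : is_MP_inverse ip A X -> penrose A X.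
Proof. by case. Qed.

Lemma penrose_adjoint A A' X X' :
  adjoint A A' -> adjoint X X' -> penrose A X -> penrose A' X'.
Proof.
move=> hA hX [AXA XAX XA_sa AX_sa]; split.
- exact: adjoint_eq (adjoint_comp (adjoint_comp hA hX) hA) hA AXA.
- exact: adjoint_eq (adjoint_comp (adjoint_comp hX hA) hX) hX XAX.
- by rewrite (adjoint_uniq (adjoint_comp hA hX) AX_sa).
- by rewrite (adjoint_uniq (adjoint_comp hX hA) XA_sa).
Qed.

Lemma range_iter_sub_adjoint A A' X X' n : (0 < n)%N ->
  adjoint A A' -> adjoint X X' -> penrose A X ->
  iter n A \o X = X \o iter n A -> A' \o X = X \o A' ->
  range (iter n A) `<=` range (iter n A').
Proof.
case: n => // m _ hA hX [AXA XAX XA_sa _] AnX A'X.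
have XE y : X y = A' (X' (X y)).
  apply: ip_injr => x; rewrite -hA -hX (XA_sa x (X y)).
  by rewrite -[X y in LHS](congr1 (fun f => f y) XAX).
have X_iter k y : exists w, iter k X y = iter k A' w.
  elim: k y => [|k IH] y; first by exists y.
  have [w wE] := IH y; exists (X' (X w)).
  by rewrite iterS wE -(iter_comm_fun k A'X) iterSr -XE.
have AnE v : iter m.+1 A v = X (iter m.+1 A (A v)).
  have /= <- := congr1 (fun f => f (A v)) AnX.
  by rewrite -!iterS !iterSr; have /= -> := congr1 (fun f => f v) AXA.
have AnXE k x : iter m.+1 A x = iter k X (iter m.+1 A (iter k A x)).
  by elim: k x => [|k IH] x //; rewrite IH AnE -iterSr -iterS.
move=> _ [x _ <-]; have [w wE] := X_iter m.+1 (iter m.+1 A (iter m.+1 A x)).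
by exists w; rewrite // (AnXE m.+1 x) wE.
Qed.

Lemma iter_comm_penrose_of_range_eq T X B n : (0 < n)%N -> penrose T X ->
  adjoint (iter n T) B -> range (iter n T) = range B ->
  iter n T \o X = X \o iter n T.
Proof.
case: n => // m _ [TXT _ XT_sa TX_sa] hB hR.
have TXTE x : T (X (T x)) = T x := congr1 (fun f => f x) TXT.
have TnXT x : iter m.+1 T (X (T x)) = iter m.+1 T x by rewrite !iterSr TXTE.
have XTB y : X (T (B y)) = B y.
  apply: ip_injr => x; have /= <- := XT_sa x (B y).
  by rewrite -!hB TnXT.
have XTTn x : X (T (iter m.+1 T x)) = iter m.+1 T x.
  have : range B (iter m.+1 T x) by rewrite -hR; exists x.
  by case=> z _ <-; exact: XTB.
have TnTX y : iter m.+1 T (T (X y)) = iter m.+1 T y.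
  apply: ip_injl => z; rewrite !hB.
  have : range (iter m.+1 T) (B z) by rewrite hR; exists z.
  case=> v _ <-; rewrite iterS.
  by have /= -> := TX_sa y (T (iter m T v)); rewrite TXTE.
by apply: funext => x /=; rewrite -[LHS]XTTn -iterS iterSr TnTX.
Qed.

End Adjoint.

Section Hilbert.
Hypothesis H_complete : forall F : set_system H, ProperFilter F -> cauchy F -> cvg F.

Lemma cauchy_seq_cvg (u : nat -> H) :
  (forall e : C, 0 < e -> exists N, forall n, (N <= n)%N -> `|u N - u n| < e) ->
  exists l : H, u @ \oo --> l.
Proof.
move=> hu; have /cvg_ex [l ul] : cvg (u n @[n --> \oo]).
  apply: H_complete; apply: cauchy_exP => e e0.
  have [N hN] := hu e e0; exists (u N); exists N => // n /= Nn.
  by rewrite -ball_normE /=; exact: hN.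
by exists l.
Qed.

Lemma orth_proj_point S x : closed S -> subspace S ->
  exists2 p, S p & forall s, S s -> ip (x - p) s = 0.
Proof.
move=> cS sS; have S0 : S 0 by case: sS.
pose D := [set rnorm (x - s) | s in S].
have hD : has_inf D.
  split; first by exists (rnorm (x - 0)), 0.
  by exists 0 => _ [s _ <-]; exact: rnorm_ge0.
set d := inf D.
have d_le s : S s -> d <= rnorm (x - s) by move=> Ss; apply: (ge_inf hD.2); exists s.
have d0 : 0 <= d by apply: (lb_le_inf hD.1) => _ [s _ <-]; exact: rnorm_ge0.
have /choice [u hu] : forall k, exists s, S s /\ rnorm (x - s) < d + k.+1%:R^-1.
  move=> k; have e0 : 0 < k.+1%:R^-1 :> R by rewrite invr_gt0.
  by have [_ [s Ss <-] hs] := inf_adherent e0 hD; exists s.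
have Su k := (hu k).1; have u_near k := (hu k).2.
have [l ul] := cauchy_seq_cvg (minimizing_seq_cauchy sS d0 d_le Su u_near).
have Sl : S l by apply: closed_cvg cS _ _ ul; exact: nearW.
exists l => //; apply: nearest_point_orth => // s Ss.
exact: le_trans (rnorm_limit_le u_near ul) (d_le s Ss).
Qed.

Lemma orth_proj_exists S : closed S -> subspace S -> exists P, orth_proj S P.
Proof.
move=> cS sS.
have /choice [P hP] : forall x, exists p, S p /\ forall s, S s -> ip (x - p) s = 0.
  by move=> x; have [p Sp hp] := orth_proj_point x cS sS; exists p.
by exists P.
Qed.

Lemma riesz_representation (f : H -> C) (M : C) : 0 < M ->
  {morph f : x y / x + y} -> (forall c x, f (c *: x) = c * f x) ->
  (forall x, `|f x| <= M * `|x|) -> exists z, forall x, f x = ip x z.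
Proof.
move=> M0 fD fZ fM.
have [f0|/existsNP [x0 fx0]] := pselect (forall x, f x = 0).
  by exists 0 => x; rewrite f0 ip0r.
have sS : subspace [set x | f x = 0].
  split => /= [|x y fx fy|c x fx]; first exact: morphD0.
    by rewrite fD fx fy addr0.
  by rewrite fZ fx mulr0.
have [p /= fp hp] := orth_proj_point x0 (closed_kernel_normle M0 fD fM) sS.
set v := x0 - p.
have fv : f v = f x0 by rewrite /v morphDB // fp subr0.
have vv0 : ip v v != 0.
  by apply/eqP => /ip_self_eq0 v0; apply: fx0; rewrite -fv v0 morphD0.
exists (Num.conj (f v / ip v v) *: v) => x; rewrite ipZr conjCK.
have /hp : f (f x *: v - f v *: x) = 0 by rewrite morphDB // !fZ mulrC subrr.
rewrite -/v ip_conj ipBl !ipZl => /eqP; rewrite conjC_eq0 subr_eq0 => /eqP h.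
by apply: (mulIf vv0); rewrite h; field.
Qed.

Lemma adjoint_exists A : bounded_op A -> exists B, is_adjoint ip A B.
Proof.
case=> AD AZ Ac; have [MA MA0 AM] := continuous_linear_normle AD AZ Ac.
have rep y : exists z, forall x, ip (A x) y = ip x z.
  have y1 : 0 < `|y| + 1 by rewrite ltr_wpDl.
  apply: (@riesz_representation _ (MA * (`|y| + 1))) => [||c x|x].
  - by rewrite mulr_gt0.
  - by move=> x1 x2; rewrite AD ipDl.
  - by rewrite AZ ipZl.
  - apply: le_trans (normr_ip_le _ _) _.
    apply: le_trans (ler_wpM2r (normr_ge0 _) (AM x)) _.
    rewrite mulrAC; apply: ler_wpM2r => //; apply: ler_wpM2l; first exact: ltW.
    by rewrite lerDl.
have [B hB] := choice rep.
have BD : {morph B : y1 y2 / y1 + y2}.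
  by move=> y1 y2; apply: ip_injr => x; rewrite ipDr -!hB ipDr.
have BZ c y : B (c *: y) = c *: B y by apply: ip_injr => x; rewrite !ipZr -!hB ipZr.
have BM y : `|B y| <= MA * `|y|.
  have [->|By0] := eqVneq (B y) 0; first by rewrite normr0 mulr_ge0 // ltW.
  have nB : 0 < `|B y| by rewrite normr_gt0.
  rewrite -(ler_pM2l nB) -expr2 -ip_self -hB.
  have r : ip (A (B y)) y \is Num.real by rewrite hB ger0_real // ip_self_ge0.
  apply: le_trans (real_ler_norm r) _; apply: le_trans (normr_ip_le _ _) _.
  by rewrite mulrA; apply: ler_wpM2r => //; rewrite mulrC; exact: AM.
exists B; split=> //; split => //; exact: linear_normle_continuous MA0 BD BM.
Qed.

Lemma nested_balls_meet (a : nat -> H) (r : nat -> R) :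
  (forall n, 0 < r n) -> (forall n, r n.+1 <= n.+1%:R^-1) ->
  (forall n, rnorm (a n - a n.+1) + r n.+1 <= r n) ->
  exists l, forall n, rnorm (a n - l) <= r n.
Proof.
move=> r_gt0 r_small r_nest.
have nest n m : (n <= m)%N -> rnorm (a n - a m) + r m <= r n.
  elim: m => [|m IH]; first by rewrite leqn0 => /eqP ->; rewrite subrr rnorm0 add0r.
  rewrite leq_eqVlt ltnS => /orP [/eqP ->|/IH nm]; first by rewrite subrr rnorm0 add0r.
  have := rnormD (a n - a m) (a m - a m.+1); rewrite addrA subrK.
  by have := r_nest m; lra.
have [l al] : exists l : H, a @ \oo --> l.
  apply: cauchy_seq_cvg => _ /complex_gt0P [e e0 ->].
  have e_ge0 : 0 <= e^-1 by rewrite invr_ge0 ltW.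
  pose M := Num.Def.archi_bound e^-1; exists M.+1 => n Mn; rewrite rnorm_lt.
  have M_small : M.+1%:R^-1 < e.
    rewrite -[e]invrK ltf_pV2 ?posrE ?invr_gt0 ?ltr0Sn //.
    by apply: lt_trans (archi_boundP e_ge0) _; rewrite ltr_nat.
  move: (nest _ _ Mn) (r_small M) (r_gt0 n) M_small.
  by set t := M.+1%:R^-1; lra.
exists l => n; apply/ler_addgt0Pr => e e0.
move/cvgrPdist_lt: al => /(_ e%:C); rewrite realC_gt0 => /(_ e0) [N _ hN].
set m := maxn n N.
have lam : rnorm (l - a m) < e by rewrite -rnorm_lt; apply: hN; exact: leq_maxr.
have := rnormD (a n - a m) (a m - l); rewrite addrA subrK (rnorm_distC (a m)).
by have := nest n m (leq_maxl _ _); have := r_gt0 m; lra.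
Qed.

Section Baire.
Variable F : nat -> set H.
Hypotheses (F_closed : forall k, closed (F k)) (F_cover : forall x, exists k, F k x).
Hypothesis F_no_ball :
  forall k x (r : R), 0 < r -> exists2 y, rnorm (x - y) < r & ~ F k y.

Lemma baire_step k x (r : R) : 0 < r -> exists y (s : R),
  [/\ 0 < s, s <= k.+1%:R^-1, rnorm (x - y) + s <= r &
      forall z, rnorm (y - z) <= s -> ~ F k z].
Proof.
move=> r0; have r2 : 0 < r / 2 by rewrite divr_gt0.
have [y xy Fy] := F_no_ball k x r2.
have [s s0 hs] := closedN_ball (@F_closed k) Fy.
pose m := Num.min (Num.min s r) k.+1%:R^-1.
have m0 : 0 < m by rewrite !lt_min s0 r0 invr_gt0 ltr0Sn.
have ms : m <= s by rewrite !ge_min lexx.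
have mr : m <= r by rewrite !ge_min lexx orbT.
have mk : m <= k.+1%:R^-1 by rewrite ge_min lexx orbT.
exists y, (m / 2); split; first by rewrite divr_gt0.
- by move: mk m0; set t := k.+1%:R^-1; lra.
- by lra.
- by move=> z yz; apply: hs; lra.
Qed.

Lemma baire_absurd : False.
Proof.
(* The guard [0 < r] makes the step total, so that [choice] applies. *)
have step (p : nat * (H * R)) : exists q : H * R, 0 < p.2.2 ->
    [/\ 0 < q.2, q.2 <= p.1.+1%:R^-1, rnorm (p.2.1 - q.1) + q.2 <= p.2.2 &
        forall z, rnorm (q.1 - z) <= q.2 -> ~ F p.1 z].
  case: p => k [x r] /=; have [r0|r_le0] := pselect (0 < r).
    by have [y [s hys]] := baire_step k x r0; exists (y, s).
  by exists (x, r) => /r_le0.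
have [g hg] := choice step.
pose fix B n := if n is n'.+1 then g (n', B n') else ((0 : H), (1 : R)).
have r_gt0 n : 0 < (B n).2.
  by elim: n => [|n IH]; [exact: ltr01 | case: (hg (n, B n) IH)].
have [l al] : exists l, forall n, rnorm ((B n).1 - l) <= (B n).2.
  apply: nested_balls_meet => // n; by case: (hg (n, B n) (r_gt0 n)).
have [k Fkl] := F_cover l.
by case: (hg (k, B k) (r_gt0 k)) => _ _ _ /(_ l (al k.+1)).
Qed.

End Baire.

Lemma baire_closed_cover (F : nat -> set H) :
  (forall k, closed (F k)) -> (forall x, exists k, F k x) ->
  exists k x0 (r : R), 0 < r /\ forall y, rnorm (x0 - y) < r -> F k y.
Proof.
move=> F_closed F_cover; apply: contrapT => no_ball.
apply: (baire_absurd F_closed F_cover) => k x r r0; apply: contrapT => h.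
apply: no_ball; exists k, x, r; split => // y xy.
by apply: contrapT => Fy; apply: h; exists y.
Qed.

Lemma orth_kernel_closure_range A A' u : adjoint A A' -> bounded_op A' ->
  (forall s, A s = 0 -> ip u s = 0) -> closure (range A') u.
Proof.
move=> hA hA' u_orth.
have sS := closure_subspace (subspace_range hA').
have [p Sp hp] := orth_proj_point u (@closed_closure _ _) sS.
have Aup : A (u - p) = 0.
  by apply: ip_injl => w; rewrite ip0l hA hp //; apply: subset_closure; exists w.
have : u - p = 0.
  by apply: ip_self_eq0; rewrite ipBl u_orth // ip_conj hp // conjC0 subrr.
by move/eqP; rewrite subr_eq0 => /eqP ->.
Qed.

Section MoorePenroseInverse.
Variables (T Ts PN PM Td : H -> H).
Hypotheses (T_bounded : bounded_op T) (Ts_bounded : bounded_op Ts).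
Hypothesis T_adj : adjoint T Ts.
Hypotheses (PN_proj : orth_proj [set x | T x = 0] PN) (PM_proj : orth_proj (range T) PM).
Hypothesis Td_spec :
  forall y, (forall s, T s = 0 -> ip (Td y) s = 0) /\ T (Td y) = PM y.

Lemma Td_uniq y u : (forall s, T s = 0 -> ip u s = 0) -> T u = PM y -> u = Td y.
Proof.
move=> u_orth Tu; have [Td_orth TTd] := Td_spec y; have [TD _ _] := T_bounded.
have Tdiff : T (u - Td y) = 0 by rewrite morphDB // Tu TTd subrr.
apply/eqP; rewrite -subr_eq0; apply/eqP/ip_self_eq0.
by rewrite ipBl u_orth // Td_orth // subrr.
Qed.

Lemma Td_T x : Td (T x) = x - PN x.
Proof.
have [TD _ _] := T_bounded; have [PNx PN_orth] := PN_proj x.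
symmetry; apply: Td_uniq => [s Ts0|]; first exact: PN_orth.
rewrite morphDB // PNx subr0; symmetry.
by apply: (orth_proj_id (subspace_range T_bounded) PM_proj); exists x.
Qed.

Lemma Td_additive : {morph Td : y1 y2 / y1 + y2}.
Proof.
have [TD _ _] := T_bounded; move=> y1 y2; symmetry; apply: Td_uniq.
  by move=> s Ts0; rewrite ipDl (Td_spec y1).1 // (Td_spec y2).1 // addr0.
by rewrite TD (Td_spec y1).2 (Td_spec y2).2 (orth_projD (subspace_range T_bounded) PM_proj).
Qed.

Lemma Td_scalable c y : Td (c *: y) = c *: Td y.
Proof.
have [_ TZ _] := T_bounded; symmetry; apply: Td_uniq.
  by move=> s Ts0; rewrite ipZl (Td_spec y).1 // mulr0.
by rewrite TZ (Td_spec y).2 (orth_projZ (subspace_range T_bounded) PM_proj).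
Qed.

Lemma Td_rnorm_le : exists2 c : R, 0 <= c & forall y, rnorm (Td y) <= c * rnorm y.
Proof.
pose G k := [set y | forall w, rnorm (ip y (PM w)) <= k%:R * rnorm (Ts w)].
have G_closed k : closed (G k) := @closed_ip_le PM _.
have G_cover y : exists k, G k y.
  have [[x _ Tx] _] := PM_proj y.
  exists (Num.Def.archi_bound (rnorm x)) => w.
  rewrite -(orth_proj_self_adjoint PM_proj) -Tx T_adj.
  apply: le_trans (rnorm_ip_le _ _) _; apply: ler_wpM2r; first exact: rnorm_ge0.
  exact/ltW/archi_boundP/rnorm_ge0.
have [k [y0 [r [r0 y0_G]]]] := baire_closed_cover G_closed G_cover.
have c0 : 0 <= 4 * k%:R / r by rewrite !mulr_ge0 // ltW ?invr_gt0.
exists (4 * k%:R / r) => // y; apply: (@rnorm_le_of_ip_le (range Ts)).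
- by rewrite mulr_ge0 ?rnorm_ge0.
- by apply: orth_kernel_closure_range T_adj Ts_bounded _; exact: (Td_spec y).1.
move=> _ [w _ <-]; rewrite -T_adj (Td_spec y).2 (orth_proj_self_adjoint PM_proj).
rewrite [X in _ <= X](_ : _ = 4 * (k%:R * rnorm (Ts w)) / r * rnorm y); last by ring.
exact: ip_bound_of_ball r0 (fun z yz => y0_G z yz w) y.
Qed.

Lemma Td_bounded : bounded_op Td.
Proof.
have [c c0 Td_le] := Td_rnorm_le.
have Td_normle y : `|Td y| <= (c + 1)%:C * `|y|.
  rewrite !normE -rmorphM lecR; apply: le_trans (Td_le y) _.
  by apply: ler_wpM2r; [exact: rnorm_ge0 | rewrite lerDl].
split; [exact: Td_additive | exact: Td_scalable |].
by apply: linear_normle_continuous Td_additive Td_normle; rewrite realC_gt0 ltr_wpDl.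
Qed.

Lemma Td_MP_inverse : is_MP_inverse ip T Td.
Proof.
have [TD _ _] := T_bounded; have sM := subspace_range T_bounded.
split; first exact: Td_bounded.
- by apply: funext => x /=; rewrite Td_T morphDB // (PN_proj x).1 subr0.
- apply: funext => y /=; symmetry; apply: Td_uniq; first exact: (Td_spec y).1.
  by rewrite (orth_proj_id sM PM_proj) //; exists (Td y).
- move=> x y /=; rewrite !Td_T ipBl ipBr.
  by rewrite (orth_proj_self_adjoint PN_proj).
- by move=> x y /=; rewrite !(Td_spec _).2; exact: (orth_proj_self_adjoint PM_proj).
Qed.

End MoorePenroseInverse.

Lemma MP_inverse_exists T : bounded_op T -> closed_range T ->
  exists Td, is_MP_inverse ip T Td.
Proof.
move=> hT cT; have [TD _ _] := hT.
have [Ts [Ts_bounded T_adj]] := adjoint_exists hT.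
have [PN PN_proj] := orth_proj_exists (closed_kernel_bounded hT) (subspace_kernel hT).
have [PM PM_proj] := orth_proj_exists cT (subspace_range hT).
have /choice [Td Td_spec] y :
    exists u, (forall s, T s = 0 -> ip u s = 0) /\ T u = PM y.
  have [[x _ Tx] _] := PM_proj y; have [PNx PN_orth] := PN_proj x.
  by exists (x - PN x); split; [exact: PN_orth | rewrite morphDB // PNx subr0].
by exists Td; exact: Td_MP_inverse hT Ts_bounded T_adj PN_proj PM_proj Td_spec.
Qed.

Lemma EP_iter_nEP T n : bounded_op T -> (0 < n)%N -> closed_range T ->
  EP ip (iter n T) -> nEP ip n T.
Proof.
move=> hT n_gt0 cT [_ EP_Tn]; split=> // X /MP_inverse_penrose pX.
have [B hB] := adjoint_exists (bounded_iter n hT).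
exact: iter_comm_penrose_of_range_eq n_gt0 pX hB.2 (EP_Tn B hB).
Qed.

Lemma SD_nEP_EP_iter T n : bounded_op T -> (0 < n)%N -> closed_range T ->
  closed_range (iter n T) -> SD ip T -> nEP ip n T -> EP ip (iter n T).
Proof.
move=> hT n_gt0 cT cTn [_ SD_T] [_ nEP_T]; split=> // B [_ hB].
have [Td MP_Td] := MP_inverse_exists hT cT.
have [Ts [Ts_bounded T_adj]] := adjoint_exists hT.
have [Td_bounded _ _ _ _] := MP_Td.
have [Tds [_ Td_adj]] := adjoint_exists Td_bounded.
have pTd := MP_inverse_penrose MP_Td.
have TnTd := nEP_T Td MP_Td.
have TsTd := SD_T Ts Td (conj Ts_bounded T_adj) MP_Td.
rewrite (adjoint_uniq hB (adjoint_iter n T_adj)); apply/seteqP; split.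
  exact: range_iter_sub_adjoint n_gt0 T_adj Td_adj pTd TnTd TsTd.
apply: range_iter_sub_adjoint n_gt0 (adjoint_sym T_adj) (adjoint_sym Td_adj)
  (penrose_adjoint T_adj Td_adj pTd) _ _.
  exact: adjoint_comm (adjoint_iter n T_adj) Td_adj TnTd.
exact: adjoint_comm (adjoint_sym T_adj) Td_adj TsTd.
Qed.

End Hilbert.

End InnerProductSpace.

Theorem mainTheorem8 (R : realType) (H : completeNormedModType R[i])
  (ip : H -> H -> R[i]) (T : H -> H) (n : nat) :
  is_inner_product ip -> bounded_op T -> closed_range T ->
  (1 <= n)%N -> closed_range (iter n T) ->
  (EP ip (iter n T) -> nEP ip n T) /\
  (SD ip T -> (nEP ip n T <-> EP ip (iter n T))).
Proof.
move=> hip hT cT n_gt0 cTn.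
have EP_nEP := EP_iter_nEP hip (@cauchy_cvg H) hT n_gt0 cT.
split=> // SD_T; split=> //.
exact: (SD_nEP_EP_iter hip (@cauchy_cvg H) hT n_gt0 cT cTn SD_T).
Qed.
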